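(* Fix real numbers $S_1>0$ and $t>0$. For $S_2\ge 0$ define $$R_{DF}(S_2)=\frac12\max_{0\le\rho\le1}\min\Big\{C(tS_1)+C\big((1-\rho^2)S_1\big),\;C(S_1)+C\big(S_1+S_2+2\rho\sqrt{S_1S_2}\big)\Big\},$$ $$R_{CF}(S_2)=\frac12C(S_1)+\frac12C\Big(S_1+\frac{tS_1S_2}{1+(t+1)S_1+S_2}\Big),$$ where $C(x)=\log_2(1+x)$. Then both $R_{DF}$ and $R_{CF}$ are concave functions of $S_2$ on $[0,\infty)$.
   Context: These are the Decode-and-Forward (DF) and Compress-and-Forward (CF) achievable rates of a half-duplex Gaussian relay channel in one fading block, where $S_1=|h_{31}|^2P_1$ is the source–destination SNR, $t=|h_{21}|^2/|h_{31}|^2$ is the ratio of source–relay to source–destination channel power gains, and $S_2=2|h_{32}|^2P_2$ is the relay–destination SNR with relay power $P_2$. *)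

From Stdlib Require Import Reals ClassicalEpsilon.
Open Scope R_scope.

Definition Cap (x : R) : R := ln (1 + x) / ln 2.

Definition DF_inner (S1 t S2 rho : R) : R :=
  Rmin (Cap (t * S1) + Cap ((1 - rho ^ 2) * S1))
       (Cap S1 + Cap (S1 + S2 + 2 * rho * sqrt (S1 * S2))).

(* For continuous g
   (as here) the supremum is attained, so this is the maximum. *)
Definition max01 (g : R -> R) : R :=
  epsilon (inhabits 0)
    (fun m => is_lub (fun y => exists rho, 0 <= rho <= 1 /\ y = g rho) m).

Definition R_DF (S1 t S2 : R) : R := / 2 * max01 (DF_inner S1 t S2).

Definition R_CF (S1 t S2 : R) : R :=
  / 2 * Cap S1 + / 2 * Cap (S1 + t * S1 * S2 / (1 + (t + 1) * S1 + S2)).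

Definition concave_on_nonneg (f : R -> R) : Prop :=
  forall x y l, 0 <= x -> 0 <= y -> 0 <= l <= 1 ->
    l * f x + (1 - l) * f y <= f (l * x + (1 - l) * y).

(* Both rates are built from C = log2(1 + .), which is concave and nondecreasing.
   For CF, S2 |-> S2 / (a + S2) is concave, so R_CF is a concave nondecreasing
   function of a concave function.  For DF, the objective inside the max is
   jointly concave in (S2, rho) once rho is allowed to move with S2: averaging
   two points (S2, rho) along the cross term rho sqrt(S1 S2) keeps both branches
   of the min above their averages (Cauchy-Schwarz bounds the new rho^2), and a
   maximum over rho of a jointly concave function is concave in S2. *)

From Stdlib Require Import Reals ClassicalEpsilon Lra Psatz.
Open Scope R_scope.

Lemma ln_le_compat x y : 0 < x -> x <= y -> ln x <= ln y.
Proof.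
  intros Hx [Hxy | ->]; [left; apply ln_increasing |]; lra.
Qed.

Lemma ln_le_sub1 x : 0 < x -> ln x <= x - 1.
Proof.
  intros Hx. rewrite <- (ln_exp (x - 1)).
  apply ln_le_compat; [exact Hx |]. pose proof (exp_ineq1_le (x - 1)). lra.
Qed.

(* Tangent-line argument at the mean [m]: [ln a <= ln m + a / m - 1], averaged over [a = u, v]. *)
Lemma ln_concave u v l : 0 < u -> 0 < v -> 0 <= l <= 1 ->
  l * ln u + (1 - l) * ln v <= ln (l * u + (1 - l) * v).
Proof.
  intros Hu Hv Hl. set (m := l * u + (1 - l) * v).
  assert (Hm : 0 < m) by (unfold m; nra).
  assert (tangent : forall a, 0 < a -> ln a - ln m <= a / m - 1).
  { intros a Ha.
    assert (Hm' : 0 < / m) by (apply Rinv_0_lt_compat; lra).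
    replace (ln a - ln m) with (ln (a / m)) by (unfold Rdiv; rewrite ln_mult, ln_Rinv; lra).
    apply ln_le_sub1, Rdiv_lt_0_compat; lra. }
  pose proof (tangent u Hu). pose proof (tangent v Hv).
  assert (Hmean : l * (u / m - 1) + (1 - l) * (v / m - 1) = 0) by (unfold m; field; fold m; lra).
  nra.
Qed.

Lemma ln2_pos : 0 < ln 2.
Proof. pose proof ln_lt_2. lra. Qed.

Lemma Cap_le_compat u v : 0 <= u -> u <= v -> Cap u <= Cap v.
Proof.
  intros Hu Huv. unfold Cap. apply Rmult_le_compat_r.
  - left. apply Rinv_0_lt_compat, ln2_pos.
  - apply ln_le_compat; lra.
Qed.

Lemma Cap_concave : concave_on_nonneg Cap.
Proof.
  intros u v l Hu Hv Hl. unfold Cap, Rdiv.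
  replace (1 + (l * u + (1 - l) * v)) with (l * (1 + u) + (1 - l) * (1 + v)) by ring.
  pose proof (ln_concave (1 + u) (1 + v) l ltac:(lra) ltac:(lra) Hl).
  pose proof (Rinv_0_lt_compat _ ln2_pos).
  nra.
Qed.

Lemma concave_on_nonneg_comp (g f : R -> R) :
  concave_on_nonneg g -> (forall u v, 0 <= u -> u <= v -> g u <= g v) ->
  concave_on_nonneg f -> (forall x, 0 <= x -> 0 <= f x) ->
  concave_on_nonneg (fun x => g (f x)).
Proof.
  intros Hg Hgmono Hf Hfpos x y l Hx Hy Hl.
  pose proof (Hfpos x Hx). pose proof (Hfpos y Hy).
  apply Rle_trans with (g (l * f x + (1 - l) * f y)); [now apply Hg |].
  apply Hgmono; [nra | now apply Hf].
Qed.

Lemma concave_on_nonneg_affine (c k : R) (g : R -> R) :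
  0 <= k -> concave_on_nonneg g -> concave_on_nonneg (fun x => c + k * g x).
Proof.
  intros Hk Hg x y l Hx Hy Hl. pose proof (Hg x y l Hx Hy Hl). nra.
Qed.

Lemma Rinv_convex p q l : 0 < p -> 0 < q -> 0 <= l <= 1 ->
  / (l * p + (1 - l) * q) <= l / p + (1 - l) / q.
Proof.
  intros Hp Hq Hl. assert (Hm : 0 < l * p + (1 - l) * q) by nra.
  assert (Hgap : l / p + (1 - l) / q - / (l * p + (1 - l) * q)
                 = l * (1 - l) * (p - q) ^ 2 / (p * q * (l * p + (1 - l) * q)))
    by (field; lra).
  assert (0 <= l * (1 - l) * (p - q) ^ 2 / (p * q * (l * p + (1 - l) * q))).
  { apply Rle_mult_inv_pos.
    - apply Rmult_le_pos; [nra | apply pow2_ge_0].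
    - apply Rmult_lt_0_compat; [apply Rmult_lt_0_compat |]; lra. }
  lra.
Qed.

(* [k s / (a + s) = k - k a / (a + s)], and [s |-> 1 / (a + s)] is convex. *)
Lemma saturation_concave (c k a : R) : 0 <= k -> 0 < a ->
  concave_on_nonneg (fun s => c + k * s / (a + s)).
Proof.
  intros Hk Ha x y l Hx Hy Hl.
  pose proof (Rinv_convex (a + x) (a + y) l ltac:(lra) ltac:(lra) Hl) as Hinv.
  replace (l * (a + x) + (1 - l) * (a + y)) with (a + (l * x + (1 - l) * y)) in Hinv by ring.
  assert (Hsat : forall s, 0 <= s -> c + k * s / (a + s) = c + k - k * a * / (a + s))
    by (intros s Hs; field; lra).
  rewrite !Hsat by nra.
  assert (0 <= k * a) by nra.
  unfold Rdiv in Hinv. nra.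
Qed.

Lemma R_CF_concave S1 t : 0 <= S1 -> 0 <= t -> concave_on_nonneg (R_CF S1 t).
Proof.
  intros HS1 Ht.
  apply (concave_on_nonneg_affine (/ 2 * Cap S1) (/ 2)
           (fun s => Cap (S1 + t * S1 * s / (1 + (t + 1) * S1 + s)))); [lra |].
  apply concave_on_nonneg_comp.
  - exact Cap_concave.
  - exact Cap_le_compat.
  - apply saturation_concave; nra.
  - intros s Hs. apply Rplus_le_le_0_compat; [lra |].
    apply Rle_mult_inv_pos; [apply Rmult_le_pos |]; nra.
Qed.

Lemma max01_is_lub (g : R -> R) (M : R) : (forall r, 0 <= r <= 1 -> g r <= M) ->
  is_lub (fun y => exists rho, 0 <= rho <= 1 /\ y = g rho) (max01 g).
Proof.
  intros HM. unfold max01. apply epsilon_spec.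
  destruct (completeness (fun y => exists rho, 0 <= rho <= 1 /\ y = g rho)) as [m Hm].
  - exists M. intros y [r [Hr ->]]. auto.
  - exists (g 0), 0. split; [lra | reflexivity].
  - exists m; exact Hm.
Qed.

Lemma max01_ub (g : R -> R) (M r : R) : (forall r, 0 <= r <= 1 -> g r <= M) ->
  0 <= r <= 1 -> g r <= max01 g.
Proof.
  intros HM Hr. apply (max01_is_lub g M HM). now exists r.
Qed.

Lemma max01_scale_le (g : R -> R) (a b c : R) : 0 <= a ->
  (forall r, 0 <= r <= 1 -> a * g r + b <= c) -> a * max01 g + b <= c.
Proof.
  intros [Ha | <-] Hg.
  - assert (Hbound : forall r, 0 <= r <= 1 -> g r <= (c - b) / a).
    { intros r Hr. apply Rmult_le_reg_l with a; [exact Ha |].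
      specialize (Hg r Hr). replace (a * ((c - b) / a)) with (c - b) by (field; lra). lra. }
    assert (max01 g <= (c - b) / a).
    { apply (max01_is_lub g _ Hbound). intros y [r [Hr ->]]. now apply Hbound. }
    replace c with (a * ((c - b) / a) + b) by (field; lra). nra.
  - specialize (Hg 0 ltac:(lra)). lra.
Qed.

Lemma max01_mix_le (f g h : R -> R) (M l : R) : 0 <= l <= 1 ->
  (forall r, 0 <= r <= 1 -> h r <= M) ->
  (forall r1 r2, 0 <= r1 <= 1 -> 0 <= r2 <= 1 ->
     exists r3, 0 <= r3 <= 1 /\ l * f r1 + (1 - l) * g r2 <= h r3) ->
  l * max01 f + (1 - l) * max01 g <= max01 h.
Proof.
  intros Hl HM Hmix.
  rewrite Rplus_comm. apply max01_scale_le; [lra |]. intros r2 Hr2.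
  rewrite Rplus_comm. apply max01_scale_le; [lra |]. intros r1 Hr1.
  destruct (Hmix r1 r2 Hr1 Hr2) as [r3 [Hr3 Hle]].
  pose proof (max01_ub h M r3 HM Hr3). lra.
Qed.

Lemma weighted_cauchy_schwarz l u v a b : 0 <= l <= 1 ->
  (l * (u * a) + (1 - l) * (v * b)) ^ 2
  <= (l * u ^ 2 + (1 - l) * v ^ 2) * (l * a ^ 2 + (1 - l) * b ^ 2).
Proof.
  intros Hl.
  assert (Hgap : (l * u ^ 2 + (1 - l) * v ^ 2) * (l * a ^ 2 + (1 - l) * b ^ 2)
                 - (l * (u * a) + (1 - l) * (v * b)) ^ 2
                 = l * (1 - l) * (u * b - v * a) ^ 2) by ring.
  assert (0 <= l * (1 - l) * (u * b - v * a) ^ 2)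
    by (apply Rmult_le_pos; [nra | apply pow2_ge_0]).
  lra.
Qed.

Lemma exists_sqrt_ratio w z q : 0 <= w -> 0 <= z -> 0 <= q -> w ^ 2 <= q * z ->
  exists r, 0 <= r /\ r * sqrt z = w /\ r ^ 2 <= q.
Proof.
  intros Hw [Hz | <-] Hq Hwz.
  - assert (Hs : 0 < sqrt z) by (apply sqrt_lt_R0; exact Hz).
    assert (Hsq : sqrt z * sqrt z = z) by (apply sqrt_sqrt; lra).
    set (r := w / sqrt z).
    assert (Hr : r * sqrt z = w) by (unfold r; field; lra).
    exists r. split; [| split; [exact Hr |]].
    + apply Rle_mult_inv_pos; assumption.
    + apply Rmult_le_reg_r with z; [exact Hz |].
      rewrite <- Hsq at 1. rewrite <- Hr in Hwz. nra.
  - exists 0. rewrite sqrt_0. nra.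
Qed.

Lemma Rmin_mix_le l a1 b1 a2 b2 : 0 <= l <= 1 ->
  l * Rmin a1 b1 + (1 - l) * Rmin a2 b2
  <= Rmin (l * a1 + (1 - l) * a2) (l * b1 + (1 - l) * b2).
Proof.
  intros Hl. pose proof (Rmin_l a1 b1). pose proof (Rmin_r a1 b1).
  pose proof (Rmin_l a2 b2). pose proof (Rmin_r a2 b2).
  apply Rmin_glb; nra.
Qed.

Lemma pow2_unit_interval r : 0 <= r <= 1 -> 0 <= r ^ 2 <= 1.
Proof. intros Hr. nra. Qed.

Lemma DF_inner_le S1 t S2 r : 0 <= S1 -> 0 <= r <= 1 ->
  DF_inner S1 t S2 r <= Cap (t * S1) + Cap S1.
Proof.
  intros HS1 Hr. unfold DF_inner. pose proof (pow2_unit_interval r Hr).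
  apply Rle_trans with (1 := Rmin_l _ _), Rplus_le_compat_l, Cap_le_compat; nra.
Qed.

(* [r3] is chosen so that the cross term [r3 sqrt S2] is the average of the
   two cross terms; by Cauchy-Schwarz [r3^2] is then at most the average of
   [rho^2], so each branch of the min dominates the average of its values. *)
Lemma DF_inner_mix S1 t x y l r1 r2 : 0 <= S1 -> 0 <= x -> 0 <= y -> 0 <= l <= 1 ->
  0 <= r1 <= 1 -> 0 <= r2 <= 1 ->
  exists r3, 0 <= r3 <= 1 /\
    l * DF_inner S1 t x r1 + (1 - l) * DF_inner S1 t y r2
    <= DF_inner S1 t (l * x + (1 - l) * y) r3.
Proof.
  intros HS1 Hx Hy Hl Hr1 Hr2.
  set (z := l * x + (1 - l) * y).
  set (q := l * r1 ^ 2 + (1 - l) * r2 ^ 2).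
  set (w := l * (r1 * sqrt x) + (1 - l) * (r2 * sqrt y)).
  pose proof (sqrt_pos x). pose proof (sqrt_pos y).
  pose proof (pow2_unit_interval r1 Hr1). pose proof (pow2_unit_interval r2 Hr2).
  assert (Hq : 0 <= q <= 1) by (unfold q; nra).
  assert (Hwz : w ^ 2 <= q * z).
  { pose proof (weighted_cauchy_schwarz l r1 r2 (sqrt x) (sqrt y) Hl) as Hcs.
    rewrite !pow2_sqrt in Hcs by assumption. exact Hcs. }
  assert (Hw : 0 <= w).
  { assert (0 <= r1 * sqrt x) by (apply Rmult_le_pos; lra).
    assert (0 <= r2 * sqrt y) by (apply Rmult_le_pos; lra).
    unfold w. nra. }
  destruct (exists_sqrt_ratio w z q Hw ltac:(unfold z; nra) ltac:(lra) Hwz)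
    as [r3 [Hr3 [Hcross Hr3q]]].
  exists r3. split; [nra |].
  unfold DF_inner. eapply Rle_trans; [apply Rmin_mix_le; exact Hl |].
  apply Rmin_glb; eapply Rle_trans; [apply Rmin_l | | apply Rmin_r |].
  - pose proof (Cap_concave ((1 - r1 ^ 2) * S1) ((1 - r2 ^ 2) * S1) l
                  ltac:(nra) ltac:(nra) Hl).
    assert (Cap (l * ((1 - r1 ^ 2) * S1) + (1 - l) * ((1 - r2 ^ 2) * S1))
            <= Cap ((1 - r3 ^ 2) * S1)) by (apply Cap_le_compat; unfold q in *; nra).
    lra.
  - assert (Hmix : S1 + z + 2 * r3 * sqrt (S1 * z)
                   = l * (S1 + x + 2 * r1 * sqrt (S1 * x))
                     + (1 - l) * (S1 + y + 2 * r2 * sqrt (S1 * y))).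
    { rewrite !sqrt_mult by (unfold z; nra).
      replace (2 * r3 * (sqrt S1 * sqrt z)) with (2 * sqrt S1 * (r3 * sqrt z)) by ring.
      rewrite Hcross. unfold w, z. ring. }
    assert (HB1 : 0 <= S1 + x + 2 * r1 * sqrt (S1 * x))
      by (pose proof (sqrt_pos (S1 * x)); nra).
    assert (HB2 : 0 <= S1 + y + 2 * r2 * sqrt (S1 * y))
      by (pose proof (sqrt_pos (S1 * y)); nra).
    pose proof (Cap_concave _ _ l HB1 HB2 Hl).
    rewrite Hmix. lra.
Qed.

Lemma R_DF_concave S1 t : 0 <= S1 -> concave_on_nonneg (R_DF S1 t).
Proof.
  intros HS1 x y l Hx Hy Hl. unfold R_DF.
  assert (l * max01 (DF_inner S1 t x) + (1 - l) * max01 (DF_inner S1 t y)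
          <= max01 (DF_inner S1 t (l * x + (1 - l) * y))).
  { apply max01_mix_le with (M := Cap (t * S1) + Cap S1); [exact Hl | |].
    - intros r Hr. apply DF_inner_le; lra.
    - intros r1 r2 Hr1 Hr2. apply DF_inner_mix; lra. }
  lra.
Qed.

Theorem theorem1 (S1 t : R) (hS1 : 0 < S1) (ht : 0 < t) :
  concave_on_nonneg (R_DF S1 t) /\ concave_on_nonneg (R_CF S1 t).
Proof.
  split; [apply R_DF_concave | apply R_CF_concave]; lra.
Qed.
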